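(* Let $\Sigma$ be a polynomial orbit-finite set, $M$ an orbit-finite monoid and $h:\Sigma^*\to M$ an equivariant homomorphism satisfying ( * ): every $x\in M$ has a letter representation. Then there is an equivariant function $g:\Sigma\times\Sigma\to\Sigma$ such that for all $a,b\in\Sigma$, $g(a,b)$ is a letter representation of $h(ab)$.
   Context: Atoms $\mathbb A$ are a countably infinite set; atom automorphisms are its bijections; polynomial orbit-finite sets are built from $\mathbb A$ and singletons by finite products and disjoint unions. $x$ is supported by $\bar a$ if every automorphism fixing $\bar a$ pointwise fixes $x$; equivariant means supported by the empty tuple (for functions: $f(\pi x)=\pi f(x)$). The least support of $x$ is the non-repeating tuple supporting $x$ whose atoms occur in every tuple supporting $x$. An orbit-finite monoid has an orbit-finite underlying set (elements finitely supported, finitely many orbits of the automorphisms fixing some tuple) and finitely supported multiplication. A letter representation of $x\in M$ is a letter $a\in\Sigma$ with $h(a)=x$ and the same least support as $x$. *)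

From mathcomp Require Import all_boot.
From Stdlib Require List.
Set Implicit Arguments. Unset Strict Implicit. Unset Printing Implicit Defensive.

Definition atom := nat.

Record perm := Perm {
  pf : atom -> atom;
  pinv : atom -> atom;
  pf_K : cancel pf pinv;
  pinv_K : cancel pinv pf }.

Definition perm_id : perm := @Perm id id (fun _ => erefl) (fun _ => erefl).

Lemma perm_comp_K (p q : perm) : cancel (pf p \o pf q) (pinv q \o pinv p).
Proof. by move=> x /=; rewrite pf_K pf_K. Qed.
Lemma perm_comp_K' (p q : perm) : cancel (pinv q \o pinv p) (pf p \o pf q).
Proof. by move=> x /=; rewrite pinv_K pinv_K. Qed.
Definition perm_comp (p q : perm) : perm :=
  @Perm (pf p \o pf q) (pinv q \o pinv p) (perm_comp_K p q) (perm_comp_K' p q).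

Definition is_action (X : Type) (act : perm -> X -> X) : Prop :=
  (forall x, act perm_id x = x) /\
  (forall p q x, act (perm_comp p q) x = act p (act q x)).

Definition fixes (pi : perm) (s : seq atom) : Prop :=
  forall a, a \in s -> pf pi a = a.

Definition supports (X : Type) (act : perm -> X -> X) (s : seq atom) (x : X) : Prop :=
  forall pi, fixes pi s -> act pi x = x.

Definition fin_supported (X : Type) (act : perm -> X -> X) (x : X) : Prop :=
  exists s, supports act s x.

Definition least_support (X : Type) (act : perm -> X -> X) (x : X) (s : seq atom) : Prop :=
  [/\ uniq s, supports act s x &
      forall t, supports act t x -> forall a, a \in s -> a \in t].

Definition orbit_finite (X : Type) (act : perm -> X -> X) : Prop :=
  (forall x, fin_supported act x) /\
  exists (s : seq atom) (reps : seq X),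
    forall x, exists2 y, List.In y reps & exists pi, fixes pi s /\ x = act pi y.

Definition orbit_finite_monoid (M : Type) (actM : perm -> M -> M)
    (mul : M -> M -> M) (one : M) : Prop :=
  [/\ is_action actM,
      (forall x y z, mul x (mul y z) = mul (mul x y) z),
      (forall x, mul one x = x /\ mul x one = x),
      orbit_finite actM &
      (* finitely supported multiplication *)
      exists s, forall pi, fixes pi s ->
        forall x y, actM pi (mul x y) = mul (actM pi x) (actM pi y)].

(** Polynomial orbit-finite sets: built from atoms and singletons by finite
    products and finite disjoint unions. *)
Inductive poly :=
  | PEmpty | PUnit | PAtom | PProd of poly & poly | PSum of poly & poly.

Fixpoint pty (p : poly) : Type :=
  match p with
  | PEmpty => Empty_set
  | PUnit => unit
  | PAtom => atom
  | PProd p q => (pty p * pty q)%type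
  | PSum p q => (pty p + pty q)%type
  end.

Fixpoint pact (p : poly) (pi : perm) : pty p -> pty p :=
  match p return pty p -> pty p with
  | PEmpty => fun x => x
  | PUnit => fun x => x
  | PAtom => fun a => pf pi a
  | PProd p q => fun x => (@pact p pi x.1, @pact q pi x.2)
  | PSum p q => fun x => match x with
                         | inl y => inl (@pact p pi y)
                         | inr z => inr (@pact q pi z)
                         end
  end.

Definition wact (p : poly) (pi : perm) (w : seq (pty p)) : seq (pty p) :=
  map (pact pi) w.

Definition pairact (p : poly) (pi : perm) (ab : pty p * pty p) : pty p * pty p :=
  (pact pi ab.1, pact pi ab.2).

Definition is_hom (S : Type) (M : Type) (mul : M -> M -> M) (one : M)
    (h : seq S -> M) : Prop :=
  h [::] = one /\ forall u v, h (u ++ v) = mul (h u) (h v).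

Definition equivariant (X Y : Type) (actX : perm -> X -> X) (actY : perm -> Y -> Y)
    (f : X -> Y) : Prop :=
  forall pi x, f (actX pi x) = actY pi (f x).

(** a is a letter representation of x: h(a) = x and a has the same least
    support as x (same set of least-support tuples). *)
Definition letter_rep (p : poly) (M : Type) (actM : perm -> M -> M)
    (h : seq (pty p) -> M) (x : M) (a : pty p) : Prop :=
  h [:: a] = x /\
  forall s, least_support (@pact p) a s <-> least_support actM x s.

From mathcomp Require Import all_boot.
From Stdlib Require Import ClassicalEpsilon FunctionalExtensionality
  PropExtensionality ProofIrrelevance.

(* The theorem is an instance of a general "equivariant choice" principle:
   if R relates points of a set with an action to points of another one,
   R is invariant under the action, and every x has an R-partner whose
   stabilizer contains the stabilizer of x, then an equivariant selector of
   R exists.  It is obtained by choosing one representative per orbit and a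
   partner for each representative, then transporting that partner along the
   orbit; the stabilizer condition makes the transport independent of the
   chosen group element.
   For the theorem, take R (a, b) c := "c is a letter representation of
   h(ab)".  Invariance of R follows from equivariance of h, since least
   supports are transported by automorphisms.  The stabilizer condition holds
   because a letter representation c of x is supported by every support of x
   (c and x share their least support), and h(ab) is supported by the atoms
   of a and b, which every automorphism fixing (a, b) fixes. *)

Lemma perm_ext (p q : perm) : pf p =1 pf q -> p = q.
Proof.
case: p => f fi fK fiK; case: q => g gi gK giK /= Efg.
have Ef : f = g by apply: functional_extensionality.
subst g; have Efi : fi = gi.
  by apply: functional_extensionality => a; rewrite -{1}(giK a) fK.
subst gi.
by rewrite (proof_irrelevance _ fK gK) (proof_irrelevance _ fiK giK).
Qed.

Definition perm_inv (p : perm) : perm := Perm (pinv_K p) (pf_K p).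

Section Action.
Variables (X : Type) (act : perm -> X -> X).
Hypothesis act_is_action : is_action act.

Lemma act_invK (p : perm) (x : X) : act (perm_inv p) (act p x) = x.
Proof.
case: act_is_action => act_id act_comp; rewrite -act_comp.
have -> : perm_comp (perm_inv p) p = perm_id by apply: perm_ext => a /=; rewrite pf_K.
exact: act_id.
Qed.

Lemma supports_act (p : perm) (t : seq atom) (x : X) :
  supports act t x -> supports act (map (pf p) t) (act p x).
Proof.
move=> supp_x rho fix_rho.
set sg := perm_comp (perm_inv p) (perm_comp rho p).
have fix_sg : fixes sg t by move=> a at_; rewrite /= (fix_rho _ (map_f _ at_)) pf_K.
have E : perm_comp rho p = perm_comp p sg by apply: perm_ext => a /=; rewrite pinv_K.
by rewrite -(proj2 act_is_action) E (proj2 act_is_action) (supp_x _ fix_sg).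
Qed.

Lemma least_support_act (p : perm) (x : X) (s : seq atom) :
  least_support act x s -> least_support act (act p x) (map (pf p) s).
Proof.
case=> uniq_s supp_s least_s; split.
- by rewrite map_inj_uniq //; apply: can_inj (pf_K p).
- exact: supports_act.
- move=> t supp_t _ /mapP [a as_ ->].
  have supp_t' : supports act (map (pinv p) t) x.
    by have := supports_act (perm_inv p) _ _ supp_t; rewrite act_invK.
  by case/mapP: (least_s _ supp_t' a as_) => c ct ->; rewrite pinv_K.
Qed.

Lemma least_support_actE (p : perm) (x : X) (s : seq atom) :
  least_support act (act p x) s <-> least_support act x (map (pinv p) s).
Proof.
split=> [ls|ls]; last first.
  by have := least_support_act p _ _ ls; rewrite -map_comp (eq_map (pinv_K p)) map_id.
by have := least_support_act (perm_inv p) _ _ ls; rewrite act_invK.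
Qed.

Definition same_orbit (x y : X) : Prop := exists p, x = act p y.

Definition orbit_rep (x : X) : X := epsilon (inhabits x) (same_orbit x).

Lemma orbit_repP (x : X) : same_orbit x (orbit_rep x).
Proof. by apply: epsilon_spec; exists x, perm_id; rewrite (proj1 act_is_action). Qed.

Lemma same_orbit_act (p : perm) (x : X) : same_orbit (act p x) = same_orbit x.
Proof.
apply: functional_extensionality => y; apply: propositional_extensionality.
case: act_is_action => _ act_comp; split=> [[r Er]|[r ->]].
- by exists (perm_comp (perm_inv p) r); rewrite act_comp -Er act_invK.
- by exists (perm_comp p r); rewrite act_comp.
Qed.

Lemma orbit_rep_act (p : perm) (x : X) : orbit_rep (act p x) = orbit_rep x.
Proof.
rewrite /orbit_rep same_orbit_act; apply: epsilon_inh_irrelevance.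
by exists x, perm_id; rewrite (proj1 act_is_action).
Qed.

Definition orbit_move (x : X) : perm :=
  proj1_sig (constructive_indefinite_description _ (orbit_repP x)).

Lemma orbit_moveE (x : X) : x = act (orbit_move x) (orbit_rep x).
Proof. exact: proj2_sig (constructive_indefinite_description _ (orbit_repP x)). Qed.

End Action.

Arguments act_invK {X act} act_is_action p x.
Arguments least_support_actE {X act} act_is_action p x s.
Arguments orbit_rep {X} act x.
Arguments orbit_rep_act {X act} act_is_action p x.
Arguments orbit_move {X act} act_is_action x.
Arguments orbit_moveE {X act} act_is_action x.

Lemma equivariant_choice {X Y : Type} {actX : perm -> X -> X}
    {actY : perm -> Y -> Y} {R : X -> Y -> Prop} :
  is_action actX -> is_action actY ->
  (forall p x y, R x y -> R (actX p x) (actY p y)) ->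
  (forall x, exists y, R x y /\ forall p, actX p x = x -> actY p y = y) ->
  exists g : X -> Y, equivariant actX actY g /\ forall x, R x (g x).
Proof.
move=> AX [_ actY_comp] R_act partner.
have [y_of y_ofP] : exists y_of : X -> Y, forall x,
    R x (y_of x) /\ forall p, actX p x = x -> actY p (y_of x) = y_of x.
  exists (fun x => proj1_sig (constructive_indefinite_description _ (partner x))).
  by move=> x; case: (constructive_indefinite_description _ _).
pose move := orbit_move AX; pose rep := orbit_rep actX.
exists (fun x => actY (move x) (y_of (rep x))); split=> [sg x|x]; last first.
  by rewrite {1}(orbit_moveE AX x); apply: R_act; case: (y_ofP (rep x)).
rewrite /rep (orbit_rep_act AX); set r := orbit_rep actX x.
have Ex : x = actX (move x) r := orbit_moveE AX x.
have Esx : actX sg x = actX (move (actX sg x)) r.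
  by rewrite {1}(orbit_moveE AX (actX sg x)) (orbit_rep_act AX).
move: (move x) (move (actX sg x)) Ex Esx => p p' Ex Esx.
(* tau = (sg p)^-1 p' stabilizes the representative r, hence its partner. *)
set tau := perm_comp (perm_inv (perm_comp sg p)) p'.
have tau_fix : actX tau r = r.
  by rewrite (proj2 AX) -Esx Ex -(proj2 AX sg p) (act_invK AX).
have -> : p' = perm_comp (perm_comp sg p) tau.
  by apply: perm_ext => a /=; rewrite !pinv_K.
by rewrite actY_comp ((y_ofP r).2 _ tau_fix) actY_comp.
Qed.

Fixpoint patoms (p : poly) : pty p -> seq atom :=
  match p return pty p -> seq atom with
  | PEmpty | PUnit => fun _ => [::]
  | PAtom => fun a => [:: a]
  | PProd p q => fun x => patoms p x.1 ++ patoms q x.2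
  | PSum p q => fun x => match x with inl y => patoms p y | inr z => patoms q z end
  end.
Arguments patoms {p}.

Lemma pact_action (p : poly) : is_action (@pact p).
Proof.
by split=> [|r s]; elim: p => //= [p IHp q IHq [x y]|p IHp q IHq [x|y]];
  rewrite ?IHp ?IHq.
Qed.

Lemma patoms_act (p : poly) (pi : perm) (x : pty p) :
  patoms (pact pi x) = map (pf pi) (patoms x).
Proof.
by elim: p x => //= [p IHp q IHq [x y]|p IHp q IHq [x|y]]; rewrite ?IHp ?IHq ?map_cat.
Qed.

Lemma pact_fixE (p : poly) (pi : perm) (x : pty p) :
  pact pi x = x <-> fixes pi (patoms x).
Proof.
elim: p x => [x|x|a|p IHp q IHq [x y]|p IHp q IHq [x|y]] /=;
  try by split=> // _ b.
- by split=> [fa b /[!inE] /eqP ->|]; last by apply; rewrite inE.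
- split=> [[/IHp fx /IHq fy] b|fxy]; first by rewrite mem_cat => /orP[/fx|/fy].
  by rewrite (proj2 (IHp x)) ?(proj2 (IHq y)) // => b bx; apply: fxy;
    rewrite mem_cat bx ?orbT.
- by rewrite -IHp; split=> [[]|->].
- by rewrite -IHq; split=> [[]|->].
Qed.
Arguments pact_fixE {p pi x}.

Lemma fresh_atom (s : seq atom) : (sumn s).+1 \notin s.
Proof.
have le_sumn a : a \in s -> a <= sumn s.
  elim: s => //= b s IH; rewrite inE => /orP[/eqP->|/IH]; first exact: leq_addr.
  by move/leq_trans; apply; apply: leq_addl.
by apply/negP => /le_sumn; rewrite ltnn.
Qed.

Definition swap_fun (a b z : atom) : atom :=
  if z == a then b else if z == b then a else z.

Lemma swap_funK (a b : atom) : involutive (swap_fun a b).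
Proof.
move=> z; rewrite /swap_fun.
case: (eqVneq z a) => [->|za]; first by rewrite eqxx; case: (eqVneq b a) => // ->.
case: (eqVneq z b) => [->|zb]; first by rewrite eqxx.
by rewrite (negbTE za) (negbTE zb).
Qed.

Definition swap (a b : atom) : perm := Perm (swap_funK a b) (swap_funK a b).

(* The atoms of x, without repetition, form a least support of x: an atom of
   x missing from a support t could be swapped with a fresh atom, fixing t
   but moving x. *)
Lemma least_support_patoms {p : poly} (x : pty p) :
  least_support (@pact p) x (undup (patoms x)).
Proof.
split; first exact: undup_uniq.
  by move=> pi fix_pi; apply/pact_fixE => a ax; apply: fix_pi; rewrite mem_undup.
move=> t supp_t a; rewrite mem_undup => ax; apply/negPn/negP => at_.
set b := (sumn (t ++ patoms x)).+1.
have := fresh_atom (t ++ patoms x); rewrite -/b mem_cat negb_or => /andP[bt bx].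
have fix_swap : fixes (swap a b) t.
  move=> z zt; rewrite /= /swap_fun.
  by rewrite (negbTE (memPn at_ _ zt)) (negbTE (memPn bt _ zt)).
have : pf (swap a b) a \in patoms (pact (swap a b) x) by rewrite patoms_act map_f.
by rewrite supp_t // /= /swap_fun eqxx (negbTE bx).
Qed.

Lemma pairact_action (p : poly) : is_action (@pairact p).
Proof.
have [act_id act_comp] := pact_action p.
by split=> [[a b]|r s [a b]]; rewrite /pairact /= ?act_id ?act_comp.
Qed.

Section LetterRepresentations.
Variables (Sigma : poly) (M : Type) (actM : perm -> M -> M).
Variable h : seq (pty Sigma) -> M.

(* A letter representation shares its least supports with the represented
   element, so it is supported by every support of that element. *)
Lemma letter_rep_supports (m : M) (c : pty Sigma) (t : seq atom) :
  letter_rep actM h m c -> supports actM t m -> supports (@pact Sigma) t c.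
Proof.
case=> _ same_ls supp_t pi fix_pi; apply/pact_fixE => a ac; apply: fix_pi.
have [_ _ least] := (same_ls _).1 (least_support_patoms c).
by apply: (least _ supp_t); rewrite mem_undup.
Qed.

Hypotheses (actM_action : is_action actM) (h_equiv : equivariant (@wact Sigma) actM h).

Lemma letter_rep_act (pi : perm) (m : M) (c : pty Sigma) :
  letter_rep actM h m c -> letter_rep actM h (actM pi m) (pact pi c).
Proof.
case=> hc same_ls; split; first by rewrite -hc -h_equiv.
move=> s; rewrite (least_support_actE (pact_action Sigma)).
by rewrite (least_support_actE actM_action).
Qed.

Lemma pair_word_supports (a b : pty Sigma) :
  supports actM (patoms a ++ patoms b) (h [:: a; b]).
Proof.
move=> pi fix_pi; rewrite -[RHS](congr1 h (_ : wact pi [:: a; b] = _)) ?h_equiv //.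
by rewrite /wact /= !(proj2 pact_fixE) // => x xs; apply: fix_pi;
  rewrite mem_cat xs ?orbT.
Qed.

End LetterRepresentations.
Arguments letter_rep_supports {Sigma M actM h m c t}.
Arguments pair_word_supports {Sigma M actM h}.

Theorem mainTheorem14 (Sigma : poly) (M : Type) (actM : perm -> M -> M)
    (mul : M -> M -> M) (one : M) (h : seq (pty Sigma) -> M) :
  orbit_finite_monoid actM mul one ->
  is_hom mul one h ->
  equivariant (@wact Sigma) actM h ->
  (forall x : M, exists a : pty Sigma, letter_rep actM h x a) ->
  exists g : pty Sigma * pty Sigma -> pty Sigma,
    equivariant (@pairact Sigma) (@pact Sigma) g /\
    forall a b : pty Sigma, letter_rep actM h (h [:: a; b]) (g (a, b)).
Proof.
move=> [actM_action _ _ _ _] _ h_equiv has_rep.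
pose R (x : pty Sigma * pty Sigma) c := letter_rep actM h (h [:: x.1; x.2]) c.
have R_act pi x c : R x c -> R (pairact pi x) (pact pi c).
  move=> rep_c; rewrite /R /= -[h [:: _; _]]/(h (wact pi [:: x.1; x.2])) h_equiv.
  exact: letter_rep_act.
have R_partner x : exists c, R x c /\
    forall pi, pairact pi x = x -> pact pi c = c.
  case: x => a b; have [c rep_c] := has_rep (h [:: a; b]).
  exists c; split=> // pi [/pact_fixE fix_a /pact_fixE fix_b].
  apply: (letter_rep_supports rep_c (pair_word_supports h_equiv a b) pi).
  by move=> z; rewrite mem_cat => /orP[/fix_a|/fix_b].
have [g [g_equiv g_rep]] :=
  equivariant_choice (pairact_action Sigma) (pact_action Sigma) R_act R_partner.
by exists g; split=> // a b; apply: (g_rep (a, b)).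
Qed.
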